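(* For $q\ge1$, the generating function $P_{q,1}(x)=\sum_{n\ge0}p_nx^n$, where $p_n$ is the total number of occurrences of the letter $1$ in all $q$-decreasing words of length $n$, is $$P_{q,1}(x)=\frac{x\left(1-qx^q+qx^{q+1}-2x^{q+1}+x^{2q+2}\right)}{\left(1-2x+x^{q+2}\right)^2},$$ and the generating function for the total number of occurrences of the letter $0$ in all $q$-decreasing words of length $n$ is $$P_{q,0}(x)=\frac{x\left(1-x^q\right)}{\left(1-2x+x^{q+2}\right)^2}.$$
   Context: For $q\ge1$, a binary word is $q$-decreasing if for every maximal run of $0$s, of length $a>0$, together with the (possibly empty) maximal run of $1$s immediately following it, of length $b$, one has $q\cdot a>b$. *)

From mathcomp Require Import all_boot all_order all_algebra.
Set Implicit Arguments. Unset Strict Implicit. Unset Printing Implicit Defensive.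
Import GRing.Theory.

(* Binary words are [seq bool]: letter 0 = false, letter 1 = true. *)

(* [qdec q w]: for every maximal run of 0s of length a > 0 together with the
   (possibly empty) maximal run of 1s immediately following it, of length b,
   we have q * a > b.  The run pair is located as w = u ++ 0^a ++ 1^b ++ v,
   where u = take i w, v = drop (i+a+b) w; maximality means: u is empty or
   ends with 1, v is empty or starts with 0, and if b = 0 then v is empty. *)
Definition qdec (q : nat) (w : seq bool) : bool :=
  [forall i : 'I_(size w).+1, forall a : 'I_(size w).+1, forall b : 'I_(size w).+1,
    let u := take i w in
    let v := drop (i + a + b) w in
    [&& w == u ++ nseq a false ++ nseq b true ++ v, 0 < a, last true u,
        ~~ head false v & (0 < b) || (v == [::])] ==> (b < q * a)].

Definition p1 (q n : nat) : nat :=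
  \sum_(w : n.-tuple bool | qdec q w) count (fun c => c == true) w.
Definition p0 (q n : nat) : nat :=
  \sum_(w : n.-tuple bool | qdec q w) count (fun c => c == false) w.

Local Open Scope ring_scope.

Definition gf_trunc (f : nat -> nat) (N : nat) : {poly int} :=
  \poly_(i < N) (f i)%:R.

Definition den (q : nat) : {poly int} := 1 - 2%:R *: 'X + 'X^(q + 2).

Definition num1 (q : nat) : {poly int} :=
  'X * (1 - q%:R *: 'X^q + q%:R *: 'X^(q + 1) - 2%:R *: 'X^(q + 1) + 'X^(2 * q + 2)).

Definition num0 (q : nat) : {poly int} := 'X * (1 - 'X^q).

From mathcomp Require Import all_boot all_order all_algebra.
From mathcomp Require Import zify ring.
Set Implicit Arguments. Unset Strict Implicit. Unset Printing Implicit Defensive.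
Import GRing.Theory.

(* Appending 0 to a q-decreasing word always gives a q-decreasing word; appending 1
   does so unless the word is tight, i.e. ends with a maximal block 0^a 1^(qa-1).  A
   tight word is u 0^a 1^(qa-1) with u q-decreasing and empty or ending in 1, and the
   block for a+1 has one more 0 and q more 1s than the block for a.  Weighting words by
   1 or by their number of letters l, this gives linear recurrences between the sums
   over all, over tight, and over empty-or-1-ending q-decreasing words.  On generating
   functions truncated at x^N they form a linear system, whose elimination yields
   (1 - 2x + x^(q+2)) C = 1 - x^(q+1) for the generating function C of q-decreasing
   words and then the stated P_{q,l}. *)

Fixpoint words n : seq (seq bool) :=
  if n is n'.+1 then [seq rcons w b | w <- words n', b <- [:: false; true]]
  else [:: [::]].

Lemma mem_words n w : (w \in words n) = (size w == n).
Proof.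
elim: n w => [|n IHn] w; first by case: w.
apply/allpairsPdep/idP => [[u [b [u_in _ ->]]]|].
  by rewrite size_rcons eqSS -IHn.
case/lastP: w => [//|u b]; rewrite size_rcons eqSS -IHn => u_in.
by exists u, b; case: b.
Qed.

Lemma uniq_words n : uniq (words n).
Proof.
elim: n => [//|n IHn]; apply: allpairs_uniq => //.
by move=> [u b] [v c] _ _ /= /rcons_inj[-> ->].
Qed.

Section WordSums.

Variable R : nmodType.
Local Open Scope ring_scope.
Implicit Types F : seq bool -> R.

Lemma big_tuple_words n F : \sum_(t : n.-tuple bool) F t = \sum_(w <- words n) F w.
Proof.
rewrite -(big_map val xpredT F); apply/perm_big/uniq_perm.
- by rewrite map_inj_uniq ?index_enum_uniq //; apply: val_inj.
- exact: uniq_words.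
move=> w; rewrite mem_words; apply/mapP/idP => [[t _ ->]|/eqP w_n].
  by rewrite size_tuple.
by exists (Tuple (introT eqP w_n)); rewrite ?mem_index_enum.
Qed.

Lemma big_words_rcons n F :
  \sum_(w <- words n.+1) F w = \sum_(w <- words n) (F (rcons w false) + F (rcons w true)).
Proof.
rewrite big_allpairs_dep; apply: eq_bigr => w _.
by rewrite big_cons big_seq1.
Qed.

Lemma big_words_cat k m F :
  \sum_(w <- words (k + m)) F w = \sum_(u <- words k) \sum_(v <- words m) F (u ++ v).
Proof.
elim: m F => [|m IHm] F.
  by rewrite addn0; apply: eq_bigr => u _; rewrite big_seq1 cats0.
rewrite addnS big_words_rcons IHm; apply: eq_bigr => u _.
by rewrite big_words_rcons; apply: eq_bigr => v _; rewrite !rcons_cat.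
Qed.

Lemma big_words_pred1 m v0 (x : R) : size v0 = m ->
  \sum_(v <- words m) (if v == v0 then x else 0) = x.
Proof.
move=> v0_m; rewrite (bigD1_seq v0) ?uniq_words ?mem_words ?v0_m //= eqxx big1 ?addr0 //.
by move=> v /negPf ->.
Qed.

End WordSums.

Lemma nseqSr (T : Type) n (x : T) : nseq n.+1 x = rcons (nseq n x) x.
Proof. by elim: n => //= n <-. Qed.

Section QDecreasing.

Variable q : nat.

Definition qdec_runs (w : seq bool) : Prop :=
  forall u a b v, w = u ++ nseq a false ++ nseq b true ++ v -> 0 < a ->
    last true u -> ~~ head false v -> (0 < b) || (v == [::]) -> b < q * a.

Lemma qdecP w : reflect (qdec_runs w) (qdec q w).
Proof.
apply: (iffP forallP) => [qw u a b v w_eq a_gt0 u1 v0 bv | qw i].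
  have size_w : size w = size u + a + b + size v.
    by rewrite w_eq !size_cat !size_nseq !addnA.
  have [ltu lta ltb] : [/\ size u < (size w).+1, a < (size w).+1 & b < (size w).+1].
    by split; lia.
  move: (qw (Ordinal ltu)) => /forallP/(_ (Ordinal lta))/forallP/(_ (Ordinal ltb)).
  move/implyP; apply.
  have -> : take (size u) w = u by rewrite w_eq take_size_cat.
  have -> : drop (size u + a + b) w = v.
    by rewrite w_eq !catA drop_size_cat // !size_cat !size_nseq.
  by rewrite -w_eq eqxx a_gt0 u1 v0 bv.
apply/forallP => a; apply/forallP => b; apply/implyP => /and5P[/eqP w_eq].
exact: qw w_eq.
Qed.

Lemma qdec_nil : qdec q [::].
Proof.
apply/qdecP => u a b v /(congr1 size); rewrite !size_cat size_nseq /=; lia.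
Qed.

Lemma qdec_rconsP w y : qdec q w ->
  reflect (forall u a b, rcons w y = u ++ nseq a false ++ nseq b true ->
             0 < a -> last true u -> b < q * a)
          (qdec q (rcons w y)).
Proof.
move=> /qdecP qw; apply: (iffP (qdecP _)) => [qwy u a b wy_eq a_gt0 u1 | final u a b v].
  by apply: (qwy u a b [::]); rewrite ?cats0 ?orbT.
case/lastP: v => [|v z]; first by rewrite cats0 => /final fin /fin/[apply].
rewrite -!rcons_cat => /rcons_inj[w_eq _] a_gt0 u1 v0 bv; apply: qw w_eq _ _ _ _ => //.
  by case: v v0 {bv}.
by case: v bv {v0} => [|x v]; rewrite ?eqxx ?orbT //= orbF.
Qed.

Definition tight_block a := nseq a false ++ nseq (q * a).-1 true.

Lemma size_tight_block a : size (tight_block a) = a + (q * a).-1.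
Proof. by rewrite size_cat !size_nseq. Qed.

Lemma size_tight_blockS a : 0 < a -> size (tight_block a.+1) = size (tight_block a) + q.+1.
Proof.
by move=> a_gt0; rewrite !size_tight_block mulnS; case: q => [|p]; rewrite ?mul0n //= addnS; lia.
Qed.

Definition tight a w :=
  let k := size w - size (tight_block a) in
  [&& 0 < a, size (tight_block a) <= size w, drop k w == tight_block a & last true (take k w)].

Lemma tight_cat a u v : size v = size (tight_block a) ->
  tight a (u ++ v) = [&& 0 < a, v == tight_block a & last true u].
Proof. by move=> v_a; rewrite /tight size_cat -v_a leq_addl addnK drop_size_cat ?take_size_cat. Qed.

Lemma tightP a w :
  reflect (0 < a /\ exists2 u, last true u & w = u ++ tight_block a) (tight a w).
Proof.
apply: (iffP idP) => [/and4P[a_gt0 _ /eqP w2 w1] | [a_gt0 [u u1 ->]]].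
  by split => //; exists (take (size w - size (tight_block a)) w); rewrite // -{2}w2 cat_take_drop.
by rewrite tight_cat // a_gt0 eqxx u1.
Qed.

Definition trail (x : bool) (s : seq bool) := find (predC1 x) (rev s).

Definition last_runs (w : seq bool) : nat * nat :=
  let b := trail true w in (trail false (take (size w - b) w), b).

Lemma last_runs_cat u a b : last true u -> 0 < a ->
  last_runs (u ++ nseq a false ++ nseq b true) = (a, b).
Proof.
move=> u1 a_gt0; rewrite /last_runs catA.
have trail_u : trail false (u ++ nseq a false) = a.
  rewrite /trail rev_cat rev_nseq find_cat has_nseq andbF size_nseq.
  case/lastP: u u1 => [|u y]; rewrite ?last_rcons ?rev_rcons /=; first by rewrite addn0.
  by move=> ->; rewrite addn0.
have -> : trail true ((u ++ nseq a false) ++ nseq b true) = b.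
  rewrite /trail rev_cat rev_nseq find_cat has_nseq andbF size_nseq rev_cat rev_nseq.
  by case: a a_gt0 {trail_u} => //= a _; rewrite addn0.
by rewrite size_cat size_nseq addnK take_size_cat ?trail_u.
Qed.

Lemma tight_uniq a a' w : tight a w -> tight a' w -> a = a'.
Proof.
move=> /tightP[a_gt0 [u u1 ->]] /tightP[a'_gt0 [u' u'1]] /(congr1 last_runs).
by rewrite /tight_block !last_runs_cat // => -[].
Qed.

Lemma tight_size a w : tight a w -> a <= size w.
Proof. by case/and4P=> _ /(leq_trans _)-> //; rewrite size_cat size_nseq leq_addr. Qed.

Definition ends_tight w := [exists a : 'I_(size w).+1, tight a w].

Lemma ends_tightP w : reflect (exists a, tight a w) (ends_tight w).
Proof.
apply: (iffP existsP) => [[a] | [a wa]]; first by exists a.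
by exists (Ordinal (tight_size wa : a < (size w).+1)).
Qed.

Lemma ends_tight_cat u a b : last true u -> 0 < a ->
  ends_tight (u ++ nseq a false ++ nseq b true) = (b == (q * a).-1).
Proof.
move=> u1 a_gt0; apply/ends_tightP/eqP => [[a' /tightP[a'_gt0 [u' u'1]]] | ->].
  by move/(congr1 last_runs); rewrite /tight_block !last_runs_cat // => -[<- <-].
by exists a; apply/tightP; split => //; exists u.
Qed.

Hypothesis q_gt0 : 0 < q.

Lemma qdec_rcons_prefix w y : qdec q (rcons w y) -> qdec q w.
Proof.
move=> /qdecP qwy; apply/qdecP => u a b [|z v] w_eq a_gt0 u1 v0 bv; last first.
  by apply: (qwy u a b (rcons (z :: v) y)); rewrite ?w_eq -?rcons_cat //= orbF in bv *.
case: b w_eq {bv} => [|b] w_eq; first by rewrite muln_gt0 q_gt0.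
case: y qwy => qwy.
  apply: ltnW (qwy u a b.+2 [::] _ _ _ _ _) => //; rewrite ?eqxx ?orbT //.
  by rewrite w_eq !cats0 (nseqSr b.+1) !rcons_cat.
by apply: (qwy u a b.+1 [:: false]); rewrite // w_eq cats0 -cats1 -!catA.
Qed.

Lemma qdec_rcons0 w : qdec q (rcons w false) = qdec q w.
Proof.
apply/idP/idP => [/qdec_rcons_prefix // | qw]; apply/qdec_rconsP => // u a [|b].
  by rewrite muln_gt0 q_gt0.
by move/(congr1 (last true)); rewrite !last_cat last_rcons nseqSr last_rcons.
Qed.

Lemma qdec_rcons1 w : qdec q (rcons w true) = qdec q w && ~~ ends_tight w.
Proof.
apply/idP/andP => [qw1 | [qw wt]].
  have qw := qdec_rcons_prefix qw1; split => //.
  apply/ends_tightP => -[a /tightP[a_gt0 [u u1 w_eq]]].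
  have: q * a < q * a; last by rewrite ltnn.
  move/(qdec_rconsP _ qw): qw1 => /(_ u a (q * a)); apply=> //.
  by rewrite w_eq /tight_block !rcons_cat -nseqSr prednK // muln_gt0 q_gt0.
apply/qdec_rconsP => // u a [|b].
  by move=> _ a_gt0; rewrite muln_gt0 q_gt0.
rewrite nseqSr -!rcons_cat => /rcons_inj[w_eq] a_gt0 u1.
move/qdecP: qw => /(_ u a b [::]); rewrite w_eq cats0 eqxx orbT.
move=> /(_ erefl a_gt0 u1 isT isT); move: wt; rewrite w_eq ends_tight_cat //; lia.
Qed.

Lemma qdec_cat_block u a b : last true u -> 0 < a ->
  qdec q (u ++ nseq a false ++ nseq b true) = qdec q u && (b < q * a).
Proof.
move=> u1 a_gt0; elim: b => [|b IHb].
  rewrite cats0 muln_gt0 q_gt0 a_gt0 !andbT.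
  elim: a {a_gt0} => [|a IHa]; first by rewrite cats0.
  by rewrite nseqSr -rcons_cat qdec_rcons0.
rewrite nseqSr -!rcons_cat qdec_rcons1 IHb ends_tight_cat // -andbA.
by congr (_ && _); apply/idP/idP; lia.
Qed.

End QDecreasing.

Local Open Scope ring_scope.

Definition wsum (P : pred (seq bool)) (f : seq bool -> int) n : int :=
  \sum_(w <- words n) if P w then f w else 0.

Definition qdec_last1 q : pred (seq bool) := fun w => qdec q w && last true w.
Definition qdec_tight q : pred (seq bool) := fun w => qdec q w && ends_tight q w.
Definition qdec_tight_at q a : pred (seq bool) := fun w => qdec q w && tight q a w.

Lemma eq_wsum P f g n : f =1 g -> wsum P f n = wsum P g n.
Proof. by move=> fg; apply: eq_bigr => w _; rewrite fg. Qed.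

Definition occ (l : bool) (w : seq bool) : int := (count_mem l w)%:R.

Lemma occ_cat l u v : occ l (u ++ v) = occ l u + occ l v.
Proof. by rewrite /occ count_cat natrD. Qed.

Lemma occ_rcons l w b : occ l (rcons w b) = occ l w + (b == l)%:R.
Proof. by rewrite -cats1 occ_cat /occ /= addn0 eq_sym. Qed.

Lemma wsum_occ_shift P l k g n : (forall w, g w = occ l w + k) ->
  wsum P g n = wsum P (occ l) n + k * wsum P (fun=> 1) n.
Proof.
move=> gE; rewrite /wsum mulr_sumr -big_split; apply: eq_bigr => w _.
by rewrite gE; case: (P w); rewrite ?mulr1 ?mulr0 ?addr0.
Qed.

Section Recurrences.

Variable q : nat.
Hypothesis q_gt0 : (0 < q)%N.

Lemma wsum_qdec0 f : wsum (qdec q) f 0 = f [::].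
Proof. by rewrite /wsum big_seq1 qdec_nil. Qed.

Lemma wsum_last1_0 f : wsum (qdec_last1 q) f 0 = f [::].
Proof. by rewrite /wsum big_seq1 /qdec_last1 qdec_nil. Qed.

Lemma wsum_qdecS f n :
  wsum (qdec q) f n.+1 = wsum (qdec q) (fun w => f (rcons w false)) n
    + wsum (qdec q) (fun w => f (rcons w true)) n
    - wsum (qdec_tight q) (fun w => f (rcons w true)) n.
Proof.
rewrite /wsum big_words_rcons -big_split -sumrB; apply: eq_bigr => w _.
rewrite qdec_rcons0 // qdec_rcons1 // /qdec_tight.
by case: (qdec q w); case: (ends_tight q w); rewrite /= ?subr0 ?addrK.
Qed.

Lemma wsum_last1S f n :
  wsum (qdec_last1 q) f n.+1 = wsum (qdec q) (fun w => f (rcons w true)) n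
    - wsum (qdec_tight q) (fun w => f (rcons w true)) n.
Proof.
rewrite /wsum big_words_rcons -sumrB; apply: eq_bigr => w _.
rewrite /qdec_last1 /qdec_tight !last_rcons qdec_rcons0 // qdec_rcons1 // andbF add0r andbT.
by case: (qdec q w); case: (ends_tight q w); rewrite /= ?subr0 ?subrr.
Qed.

Lemma wsum_tight_at f n a :
  wsum (qdec_tight_at q a) f n =
  if (0 < a)%N && (size (tight_block q a) <= n)%N then
    wsum (qdec_last1 q) (fun u => f (u ++ tight_block q a)) (n - size (tight_block q a))
  else 0.
Proof.
case: ifP => [/andP[a_gt0 block_n] | no_block]; last first.
  rewrite /wsum big_seq big1 // => w /[!mem_words]/eqP w_n.
  case: ifP => // /andP[_ /and4P[a_gt0 block_w _ _]].
  by rewrite a_gt0 -w_n block_w in no_block.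
rewrite -{1}(subnK block_n) /wsum big_words_cat; apply: eq_bigr => u _.
rewrite (eq_big_seq (fun v => if v == tight_block q a then
                              if qdec_last1 q u then f (u ++ tight_block q a) else 0
                            else 0)) ?big_words_pred1 // => v.
rewrite mem_words => /eqP v_size.
rewrite /qdec_tight_at /qdec_last1 tight_cat ?v_size // a_gt0.
case: eqP => [->|]; last by rewrite !andbF.
case u1: (last true u); last by rewrite !andbF.
by rewrite /tight_block qdec_cat_block // ltn_predL muln_gt0 q_gt0 a_gt0 !andbT.
Qed.

Lemma wsum_tight_widen f n B : (n < B)%N ->
  wsum (qdec_tight q) f n = \sum_(0 <= a < B) wsum (qdec_tight_at q a) f n.
Proof.
move=> n_B; rewrite /wsum [RHS]exchange_big /= big_seq [RHS]big_seq.
apply: eq_bigr => w /[!mem_words]/eqP w_n.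
rewrite /qdec_tight /qdec_tight_at; case: (qdec q w) => /=; last by rewrite big1.
case: ends_tightP => [[a0 wa0] | no_tight]; last first.
  by rewrite big1 // => a _; case: ifP => // wa; case: no_tight; exists a.
have a0_B : (a0 < B)%N by have := tight_size wa0; lia.
rewrite (bigD1_seq a0) ?mem_index_iota ?iota_uniq //= wa0 big1 ?addr0 // => a /negPf a_a0.
by case: ifP => // wa; rewrite (tight_uniq wa wa0) eqxx in a_a0.
Qed.

Lemma wsum_tight_rec f g n :
  (forall u a, (0 < a)%N -> f (u ++ tight_block q a.+1) = g (u ++ tight_block q a)) ->
  wsum (qdec_tight q) f n =
    (if (q <= n)%N then wsum (qdec_last1 q) (fun u => f (u ++ tight_block q 1)) (n - q) else 0)
    + (if (q < n)%N then wsum (qdec_tight q) g (n - q.+1) else 0).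
Proof.
move=> fg; have size1 : size (tight_block q 1) = q by rewrite size_tight_block muln1 add1n prednK.
rewrite (wsum_tight_widen f (leqnSn n.+1)) !big_nat_recl // !wsum_tight_at size1 /= add0r.
congr (_ + _); case: ltnP => [lt_qn | le_nq]; last first.
  rewrite big1 // => a _; rewrite wsum_tight_at size_tight_blockS //.
  by case: ifP => // /andP[_]; lia.
rewrite (wsum_tight_widen g (_ : n - q.+1 < n.+1)%N) ?big_nat_recl //; last by lia.
rewrite wsum_tight_at /= add0r; apply: eq_bigr => a _.
rewrite !wsum_tight_at size_tight_blockS //=.
have -> : (size (tight_block q a.+1) <= n - q.+1)%N =
          (size (tight_block q a.+1) + q.+1 <= n)%N by lia.
by case: ifP => // _; rewrite addnC subnDA; apply: eq_wsum => u; apply: fg.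
Qed.

End Recurrences.

Section TakePoly.

Variable R : comNzRingType.
Implicit Types p k : {poly R}.

Lemma take_poly_eq0 N p : (forall i, (i < N)%N -> p`_i = 0) -> take_poly N p = 0.
Proof.
by move=> p0; apply/polyP => i; rewrite coef_take_poly coef0; case: ifP => // /p0.
Qed.

Lemma take_polyM0 N k p : take_poly N p = 0 -> take_poly N (k * p) = 0.
Proof. by move=> p0; rewrite -(poly_take_drop N p) p0 add0r mulrA take_polyMXn_0. Qed.

Lemma take_poly_eq N p r : take_poly N (p - r) = 0 -> take_poly N p = take_poly N r.
Proof. by move=> /eqP; rewrite linearB subr_eq0 => /eqP. Qed.

Lemma take_poly_comb2 N k1 k2 p1 p2 p : p = k1 * p1 + k2 * p2 ->
  take_poly N p1 = 0 -> take_poly N p2 = 0 -> take_poly N p = 0.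
Proof.
move=> -> /(take_polyM0 k1) p10 /(take_polyM0 k2) p20.
by rewrite take_polyD p10 p20 addr0.
Qed.

Lemma take_poly_comb3 N k1 k2 k3 p1 p2 p3 p : p = k1 * p1 + k2 * p2 + k3 * p3 ->
  take_poly N p1 = 0 -> take_poly N p2 = 0 -> take_poly N p3 = 0 -> take_poly N p = 0.
Proof.
move=> -> p10 p20; apply: (take_poly_comb2 (k1 := 1) (k2 := k3) (p2 := p3)).
  by rewrite mul1r.
exact: take_poly_comb2 erefl p10 p20.
Qed.

End TakePoly.

Lemma denE q : den q = 1 - 'X *+ 2 + 'X^q * 'X^2.
Proof. by rewrite /den scaler_nat exprD. Qed.

Section LinearSystem.

Variables (q : nat) (l : bool) (c1 N : nat) (C FC TC P FP TP : {poly int}).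

Hypothesis count_rec : take_poly N (C - 1 - 'X * C *+ 2 + 'X * TC) = 0.
Hypothesis last1_count_rec : take_poly N (FC - 1 - 'X * C + 'X * TC) = 0.
Hypothesis tight_count_rec : take_poly N (TC - 'X^q * FC - 'X^(q.+1) * TC) = 0.
Hypothesis occ_rec :
  take_poly N (P - 'X * P *+ 2 + 'X * TP - 'X * C + 'X * TC *+ l) = 0.
Hypothesis last1_occ_rec :
  take_poly N (FP - 'X * P + 'X * TP - 'X * (C - TC) *+ l) = 0.
Hypothesis tight_occ_rec :
  take_poly N (TP - 'X^q * (FP + FC *+ c1) - 'X^(q.+1) * (TP + TC *+ (c1 + l))) = 0.

Lemma tight_count_closed : take_poly N (TC - 'X^q - 'X^(q.+1) * C) = 0.
Proof.
apply: (take_poly_comb2 (k1 := 1) (k2 := 'X^q) _ tight_count_rec last1_count_rec).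
by rewrite exprS; ring.
Qed.

Lemma count_closed : take_poly N (den q * C - (1 - 'X^(q.+1))) = 0.
Proof.
apply: (take_poly_comb2 (k1 := 1) (k2 := - 'X) _ count_rec tight_count_closed).
by rewrite denE !exprS; ring.
Qed.

Lemma tight_occ_closed :
  take_poly N (TP - 'X^q *+ c1 - 'X^(q.+1) * (P + C *+ (c1 + l))) = 0.
Proof.
apply: (take_poly_comb3 (k1 := 1) (k2 := 'X^q) (k3 := 'X^q *+ c1) _
          tight_occ_rec last1_occ_rec last1_count_rec).
by rewrite exprS; ring.
Qed.

Lemma occ_linear :
  take_poly N (den q * P
               - ('X * C - 'X * TC *+ l - 'X^(q.+1) *+ c1 - 'X^(q.+2) * C *+ (c1 + l))) = 0.
Proof.
apply: (take_poly_comb2 (k1 := 1) (k2 := - 'X) _ occ_rec tight_occ_closed).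
by rewrite denE !exprS; ring.
Qed.

Lemma occ_closed : (0 < q)%N -> c1 = (if l then q.-1 else 1)%N ->
  take_poly N (den q ^+ 2 * P - (if l then num1 q else num0 q)) = 0.
Proof.
(* Multiply occ_linear by den q, and replace den q * C and den q * TC
   by their closed forms. *)
move=> q_gt0 c1E.
apply: (take_poly_comb3 (k1 := den q) (k2 := 'X - 'X^(q.+2) *+ (c1 + l + l))
          (k3 := - ('X * den q) *+ l) _ occ_linear count_closed tight_count_closed).
rewrite /num1 /num0 !scaler_nat !exprD denE c1E.
by case: l; case: q q_gt0 => // p _; rewrite !exprS /=; ring.
Qed.

End LinearSystem.

Definition gf (s : nat -> int) N : {poly int} := \poly_(i < N) s i.

Section Series.

Variables (q : nat) (l : bool) (N : nat).
Hypothesis q_gt0 : (0 < q)%N.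

Local Notation C := (gf (wsum (qdec q) (fun=> 1)) N).
Local Notation FC := (gf (wsum (qdec_last1 q) (fun=> 1)) N).
Local Notation TC := (gf (wsum (qdec_tight q) (fun=> 1)) N).
Local Notation P := (gf (wsum (qdec q) (occ l)) N).
Local Notation FP := (gf (wsum (qdec_last1 q) (occ l)) N).
Local Notation TP := (gf (wsum (qdec_tight q) (occ l)) N).
Local Notation c1 := (if l then q.-1 else 1)%N.

Lemma gf_count_rec : take_poly N (C - 1 - 'X * C *+ 2 + 'X * TC) = 0.
Proof.
apply: take_poly_eq0 => -[|i] lt_iN;
  rewrite !(coefD, coefN, coefMn, coefXM, coef1, coef_poly) lt_iN /=.
  by rewrite wsum_qdec0; ring.
rewrite (ltnW lt_iN) wsum_qdecS //=; ring.
Qed.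

Lemma gf_last1_count_rec : take_poly N (FC - 1 - 'X * C + 'X * TC) = 0.
Proof.
apply: take_poly_eq0 => -[|i] lt_iN;
  rewrite !(coefD, coefN, coefXM, coef1, coef_poly) lt_iN /=.
  by rewrite wsum_last1_0; ring.
rewrite (ltnW lt_iN) wsum_last1S //=; ring.
Qed.

Lemma gf_tight_count_rec : take_poly N (TC - 'X^q * FC - 'X^(q.+1) * TC) = 0.
Proof.
apply: take_poly_eq0 => i lt_iN; rewrite !(coefD, coefN, coefXnM, coef_poly) lt_iN.
rewrite (@wsum_tight_rec _ q_gt0 (fun=> 1) (fun=> 1)) //=.
rewrite (_ : i - q < N)%N 1?(_ : i - q.+1 < N)%N; try lia.
by case: (ltnP i q) => ?; case: (ltnP i q.+1) => ?; lia.
Qed.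

Lemma occ_tight_block1 : occ l (tight_block q 1) = c1%:R.
Proof.
by rewrite /occ count_cat !count_nseq; case: l; rewrite /= ?mul0n ?mul1n ?muln1 ?add0n ?addn0.
Qed.

Lemma occ_tight_blockS a : (0 < a)%N ->
  occ l (tight_block q a.+1) = occ l (tight_block q a) + (c1 + l)%:R.
Proof.
move=> a_gt0; have qa_gt0 : (0 < q * a)%N by rewrite muln_gt0 q_gt0.
rewrite /occ !count_cat !count_nseq -!natrD; congr (_%:R).
by case: l; rewrite /= ?mul0n ?mul1n ?addn0 ?add0n ?mulnS; lia.
Qed.

Lemma gf_occ_rec :
  take_poly N (P - 'X * P *+ 2 + 'X * TP - 'X * C + 'X * TC *+ l) = 0.
Proof.
apply: take_poly_eq0 => -[|i] lt_iN;
  rewrite !(coefD, coefN, coefMn, coefXM, coef_poly) lt_iN /=.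
  by rewrite wsum_qdec0 /occ /=; ring.
rewrite (ltnW lt_iN) wsum_qdecS // (wsum_occ_shift _ _ (occ_rcons l ^~ false)).
rewrite 2!(wsum_occ_shift _ _ (occ_rcons l ^~ true)).
by case: l; rewrite /= ?mul0r ?mul1r; ring.
Qed.

Lemma gf_last1_occ_rec :
  take_poly N (FP - 'X * P + 'X * TP - 'X * (C - TC) *+ l) = 0.
Proof.
apply: take_poly_eq0 => -[|i] lt_iN;
  rewrite !(coefD, coefN, coefMn, coefXM, coef_poly) lt_iN /=.
  by rewrite wsum_last1_0 /occ /=; ring.
rewrite (ltnW lt_iN) wsum_last1S // 2!(wsum_occ_shift _ _ (occ_rcons l ^~ true)).
by case: l; rewrite /= ?mul0r ?mul1r; ring.
Qed.

Lemma gf_tight_occ_rec :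
  take_poly N (TP - 'X^q * (FP + FC *+ c1) - 'X^(q.+1) * (TP + TC *+ (c1 + l))) = 0.
Proof.
apply: take_poly_eq0 => i lt_iN; rewrite !(coefD, coefN, coefMn, coefXnM, coef_poly) lt_iN.
rewrite (@wsum_tight_rec _ q_gt0 (occ l) (fun w => occ l w + (c1 + l)%:R)); last first.
  by move=> u a a_gt0 /=; rewrite !(occ_cat l u) occ_tight_blockS // addrA.
rewrite (wsum_occ_shift _ _ (fun w => occ_cat l w (tight_block q 1))) occ_tight_block1.
rewrite (@wsum_occ_shift _ l _ (fun w => occ l w + (c1 + l)%:R) _ (fun=> erefl)).
rewrite (_ : i - q < N)%N 1?(_ : i - q.+1 < N)%N; try lia.
case: (ltnP i q) => ?; case: (ltnP i q.+1) => ?; try by exfalso; lia.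
all: by move: c1 => c; ring.
Qed.

Lemma gf_occ_closed : take_poly N (den q ^+ 2 * P - (if l then num1 q else num0 q)) = 0.
Proof.
exact: occ_closed gf_count_rec gf_last1_count_rec gf_tight_count_rec
  gf_occ_rec gf_last1_occ_rec gf_tight_occ_rec q_gt0 erefl.
Qed.

End Series.

Lemma natr_sum_count q l n :
  (\sum_(w : n.-tuple bool | qdec q w) count (fun c => c == l) w)%:R
  = wsum (qdec q) (occ l) n.
Proof.
rewrite natr_sum big_mkcond.
rewrite (big_tuple_words n (fun w => if qdec q w then (count (fun c => c == l) w)%:R else 0)).
by apply: eq_bigr => w _; case: ifP.
Qed.

Lemma gf_trunc_count q l N :
  gf_trunc (fun n => \sum_(w : n.-tuple bool | qdec q w) count (fun c => c == l) w) N
  = gf (wsum (qdec q) (occ l)) N.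
Proof. by apply: eq_poly => i _; rewrite natr_sum_count. Qed.

Theorem corollary3 (q : nat) (hq : (1 <= q)%N) :
  (forall N : nat,
     take_poly N (den q ^+ 2 * gf_trunc (p1 q) N) = take_poly N (num1 q)) /\
  (forall N : nat,
     take_poly N (den q ^+ 2 * gf_trunc (p0 q) N) = take_poly N (num0 q)).
Proof.
split=> N; apply: take_poly_eq; rewrite gf_trunc_count.
  exact: (gf_occ_closed true N hq).
exact: (gf_occ_closed false N hq).
Qed.
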